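(* Let $G$ be a connected solvable Lie group, $U=\mathbb C^n$, and let $\rho:G\to GL(n,\mathbb C)$ be a representation of $G$ on $U$. Then any complex linear subspace $V\subset U$ which is universal in $U$ is equal to $U$.
   Context: $V$ is universal in $U$ if for every $u\in U$ there exists $g\in G$ with $\rho(g)u\in V$. *)

From HB Require Import structures.
From mathcomp Require Import all_boot all_order all_algebra.
From mathcomp Require Import all_classical all_reals topology normedtype.
From mathcomp Require Import complex.

Set Implicit Arguments.
Unset Strict Implicit.
Unset Printing Implicit Defensive.

Import Order.TTheory GRing.Theory Num.Theory.
Import numFieldNormedType.Exports.
Local Open Scope classical_set_scope.
Local Open Scope ring_scope.

Record topgroup (G : topologicalType) := TopGroup {
  tg_mul : G -> G -> G;
  tg_inv : G -> G;
  tg_one : G;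
  tg_mulA : forall x y z, tg_mul x (tg_mul y z) = tg_mul (tg_mul x y) z;
  tg_mul1g : forall x, tg_mul tg_one x = x;
  tg_mulg1 : forall x, tg_mul x tg_one = x;
  tg_mulVg : forall x, tg_mul (tg_inv x) x = tg_one;
  tg_mulgV : forall x, tg_mul x (tg_inv x) = tg_one;
  tg_mul_cont : continuous (fun p : G * G => tg_mul p.1 p.2);
  tg_inv_cont : continuous tg_inv
}.

Definition is_subgroup (G : topologicalType) (gr : topgroup G) (H : set G) :=
  [/\ H (tg_one gr),
      forall x y, H x -> H y -> H (tg_mul gr x y)
    & forall x, H x -> H (tg_inv gr x)].

(* Solvability (as an abstract group): there is a subnormal series
   G = H_0 >= H_1 >= ... >= H_k = {1} of subgroups such that every
   commutator of elements of H_i lies in H_(i+1) (i.e. H_(i+1) is normal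
   in H_i with abelian quotient). *)
Definition solvable_group (G : topologicalType) (gr : topgroup G) :=
  exists (k : nat) (H : nat -> set G),
    [/\ H 0%N = setT, H k = [set tg_one gr],
        forall i, is_subgroup gr (H i),
        forall i, (i < k)%N -> H i.+1 `<=` H i
      & forall i, (i < k)%N -> forall x y, H i x -> H i y ->
          H i.+1 (tg_mul gr (tg_mul gr x y)
                            (tg_mul gr (tg_inv gr x) (tg_inv gr y)))].

Definition representation (R : realType) (G : topologicalType)
  (gr : topgroup G) (n : nat) (rho : G -> 'M[R[i]]_n) :=
  [/\ forall g, rho g \in unitmx,
      rho (tg_one gr) = 1%:M,
      forall g h, rho (tg_mul gr g h) = rho g *m rho h
    & forall i j, continuous ((fun g => complex.Re (rho g i j)) : G -> R) /\
                  continuous ((fun g => complex.Im (rho g i j)) : G -> R)].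

(* Action of rho g on a vector u of C^n, vectors written as row vectors:
   (rho g) u  corresponds to  u *m (rho g)^T. *)
Definition act (R : realType) (n : nat) (A : 'M[R[i]]_n) (u : 'rV[R[i]]_n) :=
  u *m A^T.

(* V (a subspace of C^n given as the row space of a matrix) is universal
   in U = C^n: every u in U can be moved into V by some rho g. *)
Definition universal (R : realType) (G : topologicalType) (n : nat)
  (rho : G -> 'M[R[i]]_n) (V : 'M[R[i]]_n) :=
  forall u : 'rV[R[i]]_n, exists g : G, (act (rho g) u <= V)%MS.

From HB Require Import structures.
From mathcomp Require Import all_boot all_order all_algebra.
From mathcomp Require Import all_classical all_reals topology normedtype.
From mathcomp Require Import complex lra.

Set Implicit Arguments.
Unset Strict Implicit.
Unset Printing Implicit Defensive.

Import Order.TTheory GRing.Theory Num.Theory.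
Import numFieldNormedType.Exports.
Local Open Scope classical_set_scope.
Local Open Scope ring_scope.

(* Lie-Kolchin argument.  The derived series G = D_0 > D_1 > ... of a connected
   solvable group consists of connected sets and reaches 1.  On a minimal stable
   subspace W0 each D_i acts by scalars, by descending induction on i: if
   D_(i+1) does, then for x, y in D_i the commutator [x, y] acts by a scalar c(x),
   and c(x) mu is an eigenvalue of rho(y) (for an eigenvalue mu of rho(y) on W0)
   depending continuously on x in the connected D_i; so it is constant, equal to
   its value mu at x = 1, and D_i acts commutatively on W0.  A common eigenvector
   then has a weight on D_i that conjugation by elements of the connected G
   cannot move, so its weight space is G-stable, hence all of W0.
   This yields a common eigenvector y modulo any proper stable K <= V.  By
   universality some rho(g) y lies in V; as rho(g) y = c y mod K with c <> 0,
   y lies in V, and K + <y> <= V is a larger stable subspace. *)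

Section TopologicalGroup.
Variables (G : topologicalType) (gr : topgroup G).
Local Notation "x * y" := (tg_mul gr x y) : classical_set_scope.
Local Notation "x ^-1" := (tg_inv gr x) : classical_set_scope.
Local Notation one := (tg_one gr).
Local Open Scope classical_set_scope.

Lemma tg_mul_eq1 x y : x * y = one -> y = x^-1.
Proof. by move=> xy1; rewrite -[y](tg_mul1g gr) -(tg_mulVg gr x) -tg_mulA xy1 tg_mulg1. Qed.

Lemma tg_invK x : (x^-1)^-1 = x.
Proof. by apply/esym/tg_mul_eq1; rewrite tg_mulVg. Qed.

Lemma tg_inv1 : one^-1 = one.
Proof. by apply/esym/tg_mul_eq1; rewrite tg_mul1g. Qed.

Lemma tg_invM x y : (x * y)^-1 = y^-1 * x^-1.
Proof.
by apply/esym/tg_mul_eq1; rewrite -tg_mulA [y * _]tg_mulA tg_mulgV tg_mul1g tg_mulgV.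
Qed.

Definition tg_comm x y := (x * y) * (x^-1 * y^-1).
Definition tg_conj a g := (g * a) * g^-1.

Lemma tg_conjM a b g : tg_conj (a * b) g = tg_conj a g * tg_conj b g.
Proof. by rewrite /tg_conj !tg_mulA -[_ * g^-1 * g]tg_mulA tg_mulVg tg_mulg1. Qed.

Lemma tg_conjV a g : tg_conj a^-1 g = (tg_conj a g)^-1.
Proof. by rewrite /tg_conj !tg_invM tg_invK tg_mulA. Qed.

Lemma tg_conj_comm x y g : tg_conj (tg_comm x y) g = tg_comm (tg_conj x g) (tg_conj y g).
Proof. by rewrite /tg_comm !tg_conjM !tg_conjV. Qed.

Lemma tg_conjK a g : tg_conj a g * g = g * a.
Proof. by rewrite /tg_conj -tg_mulA tg_mulVg tg_mulg1. Qed.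

Lemma tg_conjVK a g : tg_conj (tg_conj a g^-1) g = a.
Proof. by rewrite /tg_conj tg_invK !tg_mulA tg_mulgV tg_mul1g -tg_mulA tg_mulgV tg_mulg1. Qed.

Lemma tg_commK x y : tg_comm x y * y = tg_conj y x.
Proof. by rewrite /tg_comm /tg_conj -!tg_mulA tg_mulVg tg_mulg1. Qed.

Lemma tg_comm1 x : tg_comm x one = one.
Proof. by rewrite /tg_comm tg_inv1 !tg_mulg1 tg_mulgV. Qed.

Lemma tg_mul_continuous (f h : G -> G) : continuous f -> continuous h ->
  continuous (fun x => f x * h x).
Proof.
move=> cf ch x; apply: (@continuous2_cvg _ _ _ _ _ _ f h (tg_mul gr)) (cf x) (ch x).
exact: (@tg_mul_cont _ gr (f x, h x)).
Qed.

Lemma tg_inv_continuous (f : G -> G) : continuous f -> continuous (fun x => (f x)^-1).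
Proof. by move=> cf x; apply: continuous_comp; [exact: cf | exact: tg_inv_cont]. Qed.

Lemma connected_tg_image (A : set G) (f : G -> G) : connected A -> continuous f ->
  connected (f @` A).
Proof.
by move=> cA cf; apply: connected_continuous_connected => //; exact: continuous_subspaceT.
Qed.

Lemma connected_tg_mulset (A B : set G) : connected A -> connected B -> A one -> B one ->
  connected [set a * b | a in A & b in B].
Proof.
move=> cA cB A1 B1.
have -> : [set a * b | a in A & b in B] = \bigcup_(b in B) ((fun a => a * b) @` A `|` B).
  apply/seteqP; split=> [_ [a Aa [b Bb <-]]|g [b Bb [[a Aa <-]|Bg]]].
  - by exists b => //; left; exists a.
  - by exists a => //; exists b.
  - by exists one => //; exists g; rewrite ?tg_mul1g.
apply: bigcup_connected; first by exists one => b _; right.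
move=> b Bb; apply: connectedU => //.
- by exists b; split => //; exists one; rewrite ?tg_mul1g.
- apply: connected_tg_image => //.
  by apply: tg_mul_continuous => [?|]; [exact: cvg_id | exact: cst_continuous].
Qed.

Lemma tg_comm_continuous x : continuous (tg_comm x).
Proof.
apply: tg_mul_continuous; apply: tg_mul_continuous; try apply: tg_inv_continuous;
  by move=> ?; first [exact: cst_continuous | exact: cvg_id].
Qed.

Definition commset (S : set G) := [set tg_comm x y | x in S & y in S].

Fixpoint comm_prod (S : set G) (k : nat) : set G :=
  if k is k.+1 then [set c * z | c in commset S & z in comm_prod S k] else [set one].

(* For a subgroup S, inverses of commutators are commutators, so [derived S]
   is the commutator subgroup [S, S]. *)
Definition derived (S : set G) := \bigcup_k comm_prod S k.

Lemma connected_commset (S : set G) : connected S -> S one -> connected (commset S).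
Proof.
move=> cS S1.
have -> : commset S = \bigcup_(x in S) (tg_comm x @` S).
  by apply/seteqP; split=> [_ [x Sx [y Sy <-]]|_ [x Sx [y Sy <-]]]; exists x => //; exists y.
apply: bigcup_connected; first by exists one => x _; exists one; rewrite ?tg_comm1.
by move=> x _; apply: connected_tg_image => //; exact: tg_comm_continuous.
Qed.

Lemma commset1 (S : set G) : S one -> commset S one.
Proof. by move=> S1; exists one => //; exists one; rewrite ?tg_comm1. Qed.

Lemma comm_prod1 (S : set G) k : S one -> comm_prod S k one.
Proof.
move=> S1; elim: k => [//|k IH]; exists one; first exact: commset1.
by exists one; rewrite ?tg_mul1g.
Qed.

Lemma connected_derived (S : set G) : connected S -> S one -> connected (derived S).
Proof.
move=> cS S1; have ccomm k : connected (comm_prod S k).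
  elim: k => [|k IH]; first exact: connected1.
  by apply: connected_tg_mulset; [exact: connected_commset | | exact: commset1 | exact: comm_prod1].
by apply: bigcup_connected => [|k _]; first by exists one => k _; exact: comm_prod1.
Qed.

Lemma tg_conj1 g : tg_conj one g = one.
Proof. by rewrite /tg_conj tg_mulg1 tg_mulgV. Qed.

Lemma derived_conj (S : set G) a g : (forall b, S b -> S (tg_conj b g)) ->
  derived S a -> derived S (tg_conj a g).
Proof.
move=> Sconj [k _ ak]; exists k => //; elim: k a ak => [_ ->|k IH _ [_ [x Sx [y Sy <-]] [z zk <-]]].
  by rewrite tg_conj1.
rewrite tg_conjM tg_conj_comm; exists (tg_comm (tg_conj x g) (tg_conj y g)).
  by exists (tg_conj x g); [exact: Sconj | exists (tg_conj y g); [exact: Sconj |]].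
by exists (tg_conj z g); [exact: IH |].
Qed.

Lemma derived_sub (S T : set G) : is_subgroup gr T ->
  (forall x y, S x -> S y -> T (tg_comm x y)) -> derived S `<=` T.
Proof.
move=> [T1 TM _] ST a [k _]; elim: k a => [_ -> //|k IH _ [_ [x Sx [y Sy <-]] [z zk <-]]].
by apply: TM; [exact: ST | exact: IH].
Qed.

Lemma subgroup1 : is_subgroup gr [set one].
Proof. by split=> [//|x y -> ->|x ->]; rewrite ?tg_mul1g ?tg_inv1. Qed.

Fixpoint derived_series (i : nat) : set G :=
  if i is i.+1 then derived (derived_series i) else setT.

Lemma derived_series1 i : derived_series i one.
Proof. by case: i => //= i; exists 0%N. Qed.

Lemma derived_series_comm i x y : derived_series i x -> derived_series i y ->
  derived_series i.+1 (tg_comm x y).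
Proof.
move=> Dx Dy; exists 1%N => //; exists (tg_comm x y); first by exists x => //; exists y.
by exists one; rewrite ?tg_mulg1.
Qed.

Lemma derived_series_conj i a g : derived_series i a -> derived_series i (tg_conj a g).
Proof. by elim: i a => [//|i IH] a /=; apply: derived_conj => b; exact: IH. Qed.

Lemma connected_derived_series i : connected [set: G] -> connected (derived_series i).
Proof.
move=> cG; elim: i => [//|i IH] /=; apply: connected_derived => //; exact: derived_series1.
Qed.

Lemma solvable_derived_series : solvable_group gr ->
  exists k, forall i, (k <= i)%N -> derived_series i `<=` [set one].
Proof.
move=> [k [H [H0 Hk Hsub _ Hcomm]]]; exists k.
have DH i : (i <= k)%N -> derived_series i `<=` H i.
  elim: i => [_|i IH ik]; first by rewrite H0.
  by apply: derived_sub => // x y Dx Dy; apply: Hcomm => //; apply: IH (ltnW ik) _ _.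
move=> i /subnKC <-; elim: (i - k)%N => [|d IH]; first by rewrite addn0 -Hk; exact: DH.
rewrite addnS; apply: derived_sub => [|x y /IH -> /IH ->]; first exact: subgroup1.
by rewrite /tg_comm tg_inv1 !tg_mulg1.
Qed.

End TopologicalGroup.

Section ComplexContinuity.
Variables (R : realType) (T : topologicalType).

(* [R[i]] carries no topology of its own: continuity is that of Re and Im. *)
Definition ccont (f : T -> R[i]) :=
  continuous (fun x => complex.Re (f x)) /\ continuous (fun x => complex.Im (f x)).

Lemma ccont_cst c : ccont (fun=> c).
Proof. by split; exact: cst_continuous. Qed.

Lemma ccontD f h : ccont f -> ccont h -> ccont (fun x => f x + h x).
Proof.
move=> [f1 f2] [h1 h2]; split=> x.
- have -> : (fun x => complex.Re (f x + h x)) = (fun x => complex.Re (f x) + complex.Re (h x)).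
    by apply: funext => y; case: (f y) => ? ?; case: (h y).
  exact: cvgD (f1 x) (h1 x).
- have -> : (fun x => complex.Im (f x + h x)) = (fun x => complex.Im (f x) + complex.Im (h x)).
    by apply: funext => y; case: (f y) => ? ?; case: (h y).
  exact: cvgD (f2 x) (h2 x).
Qed.

Lemma ccontM f h : ccont f -> ccont h -> ccont (fun x => f x * h x).
Proof.
move=> [f1 f2] [h1 h2]; split=> x.
- have -> : (fun x => complex.Re (f x * h x)) = (fun x =>
      complex.Re (f x) * complex.Re (h x) - complex.Im (f x) * complex.Im (h x)).
    by apply: funext => y; case: (f y) => ? ?; case: (h y).
  exact: cvgB (cvgM (f1 x) (h1 x)) (cvgM (f2 x) (h2 x)).
- have -> : (fun x => complex.Im (f x * h x)) = (fun x =>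
      complex.Re (f x) * complex.Im (h x) + complex.Im (f x) * complex.Re (h x)).
    by apply: funext => y; case: (f y) => ? ?; case: (h y).
  exact: cvgD (cvgM (f1 x) (h2 x)) (cvgM (f2 x) (h1 x)).
Qed.

Lemma ccont_sum (I : Type) (r : seq I) (P : pred I) (F : I -> T -> R[i]) :
  (forall i, ccont (F i)) -> ccont (fun x => \sum_(i <- r | P i) F i x).
Proof.
move=> cF; rewrite -fct_sumE.
by elim/big_rec: _ => [|i g _ cg]; [exact: ccont_cst | exact: ccontD].
Qed.

Lemma ccont_comp (f : T -> R[i]) (h : T -> T) : ccont f -> continuous h ->
  ccont (fun x => f (h x)).
Proof.
move=> [f1 f2] ch; split=> x; first exact: continuous_comp (ch x) (f1 (h x)).
exact: continuous_comp (ch x) (f2 (h x)).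
Qed.

Definition mxcont p q (M : T -> 'M[R[i]]_(p, q)) := forall i j, ccont (fun x => M x i j).

Lemma mxcont_cst p q (A : 'M[R[i]]_(p, q)) : mxcont (fun=> A).
Proof. by move=> i j; exact: ccont_cst. Qed.

Lemma mxcont_mul p q r (A : T -> 'M[R[i]]_(p, q)) (B : T -> 'M[R[i]]_(q, r)) :
  mxcont A -> mxcont B -> mxcont (fun x => A x *m B x).
Proof.
move=> cA cB i j; under eq_fun => x do rewrite mxE.
by apply: ccont_sum => k; exact: ccontM.
Qed.

Lemma mxcont_tr p q (A : T -> 'M[R[i]]_(p, q)) : mxcont A -> mxcont (fun x => (A x)^T).
Proof. by move=> cA i j; under eq_fun => x do rewrite mxE; exact: cA. Qed.

Lemma mxcont_comp p q (A : T -> 'M[R[i]]_(p, q)) (h : T -> T) :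
  mxcont A -> continuous h -> mxcont (fun x => A (h x)).
Proof. by move=> cA ch i j; exact: (ccont_comp (cA i j)). Qed.

Lemma exists_notin_itv (s : seq R) (a b : R) : a < b -> exists2 t, a < t < b & t \notin s.
Proof.
elim: s a b => [|x s IH] a b ab; first by exists ((a + b) / 2) => //; apply/andP; split; lra.
have [xle|xgt] := lerP x ((a + b) / 2).
- have [|t /andP[t1 t2] ts] := IH ((a + b) / 2) b; first lra.
  exists t; first by apply/andP; split; lra.
  by rewrite in_cons negb_or ts andbT; apply/eqP => tx; lra.
- have [|t /andP[t1 t2] ts] := IH a ((a + b) / 2); first lra.
  exists t; first by apply/andP; split; lra.
  by rewrite in_cons negb_or ts andbT; apply/eqP => tx; lra.
Qed.

Lemma connected_finite_real_const (A : set T) (h : T -> R) (s : seq R) :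
  connected A -> continuous h -> (forall x, A x -> h x \in s) ->
  forall x y, A x -> A y -> h x = h y.
Proof.
move=> cA ch hs.
have /connected_intervalP hA : connected (h @` A).
  by apply: connected_continuous_connected => //; exact: continuous_subspaceT.
have hlt x y : A x -> A y -> ~ h x < h y.
  move=> Ax Ay xy; have [t /andP[xt ty] ts] := exists_notin_itv s xy.
  have [z Az hz] : (h @` A) t by apply: (hA (h x) (h y)); [exists x | exists y | rewrite !ltW].
  by move: ts; rewrite -hz hs.
by move=> x y Ax Ay; apply/eqP; rewrite eq_le !leNgt; apply/andP; split; apply/negP; exact: hlt.
Qed.

Lemma connected_finite_const (A : set T) (f : T -> R[i]) (s : seq R[i]) :
  connected A -> ccont f -> (forall x, A x -> f x \in s) ->
  forall x y, A x -> A y -> f x = f y.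
Proof.
move=> cA [f1 f2] fs x y Ax Ay.
have fs' (g : R[i] -> R) z : A z -> g (f z) \in map g s by move=> /fs; exact: map_f.
have := connected_finite_real_const cA f1 (fs' _) Ax Ay.
have := connected_finite_real_const cA f2 (fs' _) Ax Ay.
by case: (f x) (f y) => a b [c d] /= -> ->.
Qed.

End ComplexContinuity.

Section StableSubspaces.
Variables (F : closedFieldType) (n : nat).
Implicit Types (W M N : 'M[F]_n) (v w : 'rV[F]_n).

Lemma stablemx_rV p (E : 'M[F]_(p, n)) M :
  (forall v, (v <= E)%MS -> (v *m M <= E)%MS) -> stablemx E M.
Proof. by move=> EM; apply/rV_subP => _ /submxP[u ->]; rewrite mulmxA EM ?submxMl. Qed.

Lemma scale_vec_inj v : v != 0 -> injective (fun a : F => a *: v).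
Proof.
move=> v0 a b /eqP; rewrite -subr_eq0 -scalerBl scaler_eq0 (negPf v0) orbF subr_eq0.
by move/eqP.
Qed.

Lemma stable_eigenvector W M : W != 0 -> stablemx W M ->
  exists v, [/\ (v <= W)%MS, v != 0 & exists c, v *m M = c *: v].
Proof.
move=> W0 WM; have /closed_rootP[c] : size (char_poly (restrictmx W M)) != 1%N.
  by rewrite size_char_poly eqSS mxrank_eq0.
rewrite -eigenvalue_root_char => /eigenvalueP[x /eigenspaceP xc x0].
exists (x *m row_base W); split.
- by rewrite (submx_trans (submxMl _ _)) // eq_row_base.
- by rewrite mulmx_free_eq0 ?row_base_free.
- exists c; apply/eigenspaceP.
  by rewrite -sub_eigenspace_conjmx ?row_base_free ?stablemx_row_base.
Qed.

Lemma stable_cap_eigenspace W M N c : stablemx W N ->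
  (forall w, (w <= W)%MS -> w *m M *m N = w *m N *m M) ->
  stablemx (W :&: eigenspace M c)%MS N.
Proof.
move=> WN MN; apply: stablemx_rV => w; rewrite !sub_capmx => /andP[wW /eigenspaceP wM].
rewrite (submx_trans (submxMr _ wW) WN); apply/eigenspaceP.
by rewrite -MN // wM scalemxAl.
Qed.

Lemma common_eigenvector_stable (I : Type) (P : I -> Prop) (f : I -> 'M[F]_n) W :
  W != 0 -> (forall a, P a -> stablemx W (f a)) ->
  (forall a b, P a -> P b -> forall w, (w <= W)%MS -> w *m f a *m f b = w *m f b *m f a) ->
  exists w, [/\ (w <= W)%MS, w != 0 & forall a, P a -> exists c, w *m f a = c *: w].
Proof.
have [r] := ubnP (\rank W); elim: r W => // r IH W; rewrite ltnS => rW W0 Wf fC.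
have [[a [Pa Wa]] | Wscalar] := pselect (exists a, P a /\
  ~ exists c, forall w, (w <= W)%MS -> w *m f a = c *: w); last first.
  exists (nz_row W); split; [exact: nz_row_sub | by rewrite nz_row_eq0 |].
  move=> a Pa; have [[c Wc] | Wa] := pselect (exists c, forall w, (w <= W)%MS -> w *m f a = c *: w).
    by exists c; apply: Wc; exact: nz_row_sub.
  by case: Wscalar; exists a.
have [v [vW v0 [c vc]]] := stable_eigenvector W0 (Wf a Pa).
pose E := (W :&: eigenspace (f a) c)%MS.
have EW : (E <= W)%MS by exact: capmxSl.
have rE : (\rank E < r)%N.
  apply: leq_trans rW; apply: rank_ltmx; rewrite ltmxE EW /=.
  apply/negP => WE; apply: Wa; exists c => w /submx_trans/(_ WE).
  by rewrite sub_capmx => /andP[_ /eigenspaceP].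
have E0 : E != 0.
  by apply: contraNneq v0 => E0; rewrite -submx0 -E0 sub_capmx vW; exact/eigenspaceP.
have Ef b : P b -> stablemx E (f b).
  by move=> Pb; apply: stable_cap_eigenspace; [exact: Wf | exact: fC].
have EC b b' : P b -> P b' -> forall w, (w <= E)%MS -> w *m f b *m f b' = w *m f b' *m f b.
  by move=> Pb Pb' w /submx_trans/(_ EW); exact: fC.
have [w [wE w0 wf]] := IH E rE E0 Ef EC.
by exists w; split => //; exact: submx_trans EW.
Qed.

Lemma exists_minimal_stable (I : Type) (f : I -> 'M[F]_n) W :
  W != 0 -> (forall a, stablemx W (f a)) ->
  exists W0 : 'M_n, [/\ (W0 <= W)%MS, W0 != 0, (forall a, stablemx W0 (f a)) &
    forall Y : 'M_n, (Y <= W0)%MS -> Y != 0 -> (forall a, stablemx Y (f a)) -> (W0 <= Y)%MS].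
Proof.
have [r] := ubnP (\rank W); elim: r W => // r IH W; rewrite ltnS => rW W0 Wf.
have [[Y [YW Y0 Yf WY]] | Wmin] := pselect (exists Y : 'M_n,
  [/\ (Y <= W)%MS, Y != 0, (forall a, stablemx Y (f a)) & ~~ (W <= Y)%MS]).
  have [|Z [ZY Z0 Zf Zmin]] := IH Y _ Y0 Yf.
    by apply: leq_trans rW; apply: rank_ltmx; rewrite ltmxE YW.
  by exists Z; split => //; exact: submx_trans YW.
exists W; split => // Y YW Y0 Yf; apply/negPn/negP => WY.
by apply: Wmin; exists Y.
Qed.

Lemma linear_pred_mx (P : 'rV[F]_n -> Prop) : P 0 ->
  (forall a v w, P v -> P w -> P (a *: v + w)) ->
  exists X : 'M[F]_n, forall v, (v <= X)%MS <-> P v.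
Proof.
move=> P0 Plin.
pose PX r := `[< exists X : 'M_n, (forall v, (v <= X)%MS -> P v) /\ \rank X = r >].
have PX0 : exists r, PX r.
  by exists 0%N; apply/asboolP; exists 0; rewrite mxrank0; split=> // v; rewrite submx0 => /eqP->.
have PXn r : PX r -> (r <= n)%N by move=> /asboolP[X [_ <-]]; exact: rank_leq_col.
case: (ex_maxnP PX0 PXn) => r /asboolP[X [XP <-]] Xmax.
exists X => v; split=> [|Pv]; first exact: XP.
have XvP w : (w <= X + v)%MS -> P w.
  case/sub_addsmxP=> -[u1 u2] /= ->; rewrite addrC [u2]mx11_scalar mul_scalar_mx.
  by apply: Plin => //; apply: XP; exact: submxMl.
have /Xmax : PX (\rank (X + v)%MS) by apply/asboolP; exists (X + v)%MS.
by rewrite (geq_leqif (mxrank_leqif_sup (addsmxSl X v))); exact: submx_trans (addsmxSr X v).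
Qed.

End StableSubspaces.

Lemma connected_eigen_const (R : realType) (T : topologicalType) n (A : set T)
    (M : T -> 'M[R[i]]_n) (N : 'M[R[i]]_n) (v : 'rV[R[i]]_n) :
  connected A -> mxcont M -> v != 0 ->
  (forall x, A x -> exists2 c, v *m M x = c *: v & eigenvalue N c) ->
  forall x y, A x -> A y -> v *m M x = v *m M y.
Proof.
move=> cA cM v0 Mv.
have /existsP[j vj] : [exists j, v 0 j != 0].
  apply: contraR v0 => /existsPn v0; apply/eqP/rowP => j; rewrite mxE.
  exact/eqP/negbNE/v0.
pose c x := (v *m M x) 0 j / v 0 j.
have Mc x : A x -> v *m M x = c x *: v /\ eigenvalue N (c x).
  by move=> /Mv[d vd Nd]; rewrite /c vd mxE mulfK.
have [s Ns] := closed_field_poly_normal (char_poly N).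
have cs x : A x -> c x \in s.
  move=> /Mc[_]; rewrite eigenvalue_root_char Ns rootZ ?root_prod_XsubC //.
  by rewrite lead_coef_eq0 -size_poly_eq0 size_char_poly.
have cc : ccont c.
  apply: ccontM; last exact: ccont_cst.
  exact: (mxcont_mul (mxcont_cst _ v) cM 0 j).
move=> x y Ax Ay; rewrite (Mc x Ax).1 (Mc y Ay).1.
by rewrite (connected_finite_const cA cc cs Ax Ay).
Qed.

Section LieKolchin.
Variables (R : realType) (G : topologicalType) (gr : topgroup G) (n : nat).
Hypotheses (Gconn : connected [set: G]) (Gsolv : solvable_group gr).
Variables (sig : G -> 'M[R[i]]_n) (W : 'M[R[i]]_n).
Implicit Types (v w : 'rV[R[i]]_n).
Hypothesis sigW : forall g, stablemx W (sig g).
Hypothesis sigM : forall g h w, (w <= W)%MS ->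
  w *m sig (tg_mul gr g h) = w *m sig h *m sig g.
Hypothesis sig1 : forall w, (w <= W)%MS -> w *m sig (tg_one gr) = w.
Hypothesis sig_cont : mxcont sig.

Lemma act_stable g w : (w <= W)%MS -> (w *m sig g <= W)%MS.
Proof. by move=> wW; exact: submx_trans (submxMr _ wW) (sigW g). Qed.

Lemma actKV g w : (w <= W)%MS -> w *m sig g *m sig (tg_inv gr g) = w.
Proof. by move=> wW; rewrite -sigM // tg_mulVg sig1. Qed.

Lemma act_eq0 g w : (w <= W)%MS -> (w *m sig g == 0) = (w == 0).
Proof.
move=> wW; apply/eqP/eqP => [w0|->]; last by rewrite mul0mx.
by rewrite -(actKV g wW) w0 mul0mx.
Qed.

Lemma conj_eigen_const (A : set G) a v : connected A -> A (tg_one gr) ->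
  (v <= W)%MS -> v != 0 ->
  (forall x, A x -> exists c, v *m sig (tg_conj gr a x) = c *: v) ->
  forall x, A x -> v *m sig (tg_conj gr a x) = v *m sig a.
Proof.
move=> cA A1 vW v0 Av.
pose M x := sig (tg_inv gr x) *m sig a *m sig x.
have vM x : v *m sig (tg_conj gr a x) = v *m M x.
  by rewrite /tg_conj sigM // sigM ?act_stable // !mulmxA.
have cM : mxcont M.
  apply: mxcont_mul sig_cont; apply: mxcont_mul (mxcont_cst _ _).
  by apply: mxcont_comp sig_cont _; apply: tg_inv_continuous => ?; exact: cvg_id.
move=> x Ax; rewrite vM.
have -> : v *m sig a = v *m M (tg_one gr) by rewrite /M tg_inv1 !mulmxA !sig1 ?act_stable.
(* [M y] is conjugate to [sig a], so it can only scale [v] by an eigenvalue of [sig a]. *)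
apply: (connected_eigen_const (N := sig a) cA cM v0) => // y Ay.
have [c vc] := Av y Ay; exists c; first by rewrite -vc vM.
apply/eigenvalueP; exists (v *m sig (tg_inv gr y)); last by rewrite act_eq0.
rewrite -[LHS](actKV y) ?act_stable //.
by move: vc; rewrite vM /M !mulmxA => ->; rewrite scalemxAl.
Qed.

Section Irreducible.
Variable W0 : 'M[R[i]]_n.
Hypotheses (W0W : (W0 <= W)%MS) (W0_neq0 : W0 != 0) (sigW0 : forall g, stablemx W0 (sig g)).
Hypothesis W0_min : forall Y : 'M_n, (Y <= W0)%MS -> Y != 0 ->
  (forall g, stablemx Y (sig g)) -> (W0 <= Y)%MS.

Definition scalar_on a := exists c, forall w, (w <= W0)%MS -> w *m sig a = c *: w.

Lemma act_stableW0 g w : (w <= W0)%MS -> (w *m sig g <= W0)%MS.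
Proof. by move=> wW0; exact: submx_trans (submxMr _ wW0) (sigW0 g). Qed.

Lemma scalar_comm_commute (A : set G) y : connected A -> A (tg_one gr) ->
  (forall x, A x -> scalar_on (tg_comm gr x y)) ->
  forall x, A x -> forall w, (w <= W0)%MS -> w *m sig x *m sig y = w *m sig y *m sig x.
Proof.
move=> cA A1 Acomm x Ax.
have [v [vW0 v0 [mu vmu]]] := stable_eigenvector W0_neq0 (sigW0 y).
have vW := submx_trans vW0 W0W.
have mu0 : mu != 0.
  by apply: contraNneq v0 => mu0; rewrite -(act_eq0 y vW) vmu mu0 scale0r.
have conj_mu z c : A z -> (forall w, (w <= W0)%MS -> w *m sig (tg_comm gr z y) = c *: w) ->
    v *m sig (tg_conj gr y z) = (c * mu) *: v.
  move=> Az zc; rewrite -tg_commK sigM // vmu -scalemxAl zc //.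
  by rewrite scalerA mulrC.
have [c xc] := Acomm x Ax.
have c1 : c = 1.
  apply: (mulIf mu0); rewrite mul1r; apply: (scale_vec_inj v0).
  rewrite /= -(conj_mu x) // (conj_eigen_const cA A1 vW v0) // => z Az.
  by have [d zd] := Acomm z Az; exists (d * mu); exact: conj_mu.
move=> w wW0; have wW := submx_trans wW0 W0W.
have -> : w *m sig y *m sig x = w *m sig x *m sig y *m sig (tg_comm gr x y).
  by rewrite -!sigM ?act_stable // tg_commK tg_conjK.
by rewrite xc ?act_stableW0 // c1 scale1r.
Qed.

Lemma normal_commuting_scalar (D : set G) :
  (forall a g, D a -> D (tg_conj gr a g)) ->
  (forall a b, D a -> D b -> forall w, (w <= W0)%MS -> w *m sig a *m sig b = w *m sig b *m sig a) ->
  forall a, D a -> scalar_on a.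
Proof.
move=> Dconj DC.
have [w0 [w0W0 w0_neq0 w0D]] := common_eigenvector_stable W0_neq0 (fun a _ => sigW0 a) DC.
have w0W := submx_trans w0W0 W0W.
have w0_conj a c g : D a -> w0 *m sig a = c *: w0 -> w0 *m sig (tg_conj gr a g) = c *: w0.
  move=> Da <-; apply: (conj_eigen_const Gconn) => // x _.
  exact: w0D (Dconj a x Da).
pose weight (x : 'rV[R[i]]_n) := forall a c, D a -> w0 *m sig a = c *: w0 -> x *m sig a = c *: x.
pose P x := (x <= W0)%MS /\ weight x.
have P0 : P 0 by split=> [|a c _ _]; rewrite ?sub0mx ?mul0mx ?scaler0.
have Plin k x z : P x -> P z -> P (k *: x + z).
  move=> [xW0 xw] [zW0 zw]; split=> [|a c Da w0a]; first by rewrite addmx_sub ?scalemx_sub.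
  by rewrite mulmxDl -scalemxAl (xw a c) // (zw a c) // scalerDr !scalerA mulrC.
have [X XP] := linear_pred_mx P0 Plin.
have X_stable g : stablemx X (sig g).
  apply: stablemx_rV => x /XP[xW0 xw]; apply/XP; split=> [|a c Da w0a].
    exact: act_stableW0.
  have ag : tg_mul gr a g = tg_mul gr g (tg_conj gr a (tg_inv gr g)).
    by rewrite -[in LHS](tg_conjVK gr a g) tg_conjK.
  rewrite -sigM ?(submx_trans xW0) // ag sigM ?(submx_trans xW0) //.
  by rewrite (xw _ c) ?scalemxAl //; [exact: Dconj | exact: w0_conj].
have W0X : (W0 <= X)%MS.
  apply: W0_min => //; first by apply/rV_subP => x /XP[].
  by apply: contraNneq w0_neq0 => X0; rewrite -submx0 -X0; apply/XP; split=> // a c _ ->.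
move=> a Da; have [c w0c] := w0D a Da; exists c => w wW0.
by have /XP[_ wc] := submx_trans wW0 W0X; exact: wc.
Qed.

Lemma derived_series_scalar i a : derived_series gr i a -> scalar_on a.
Proof.
have [k Dk] := solvable_derived_series Gsolv.
suff scalar_d d j : (k - j <= d)%N -> forall a, derived_series gr j a -> scalar_on a.
  exact: scalar_d (k - i)%N i (leqnn _) a.
elim: d j => [|d IH] j kj b Db.
  move: kj; rewrite leqn0 subn_eq0 => /Dk/(_ b Db) ->.
  by exists 1 => w wW0; rewrite scale1r sig1 // (submx_trans wW0).
apply: (normal_commuting_scalar (@derived_series_conj _ gr j) _ Db) => a1 a2 Da1 Da2.
have Dj_conn := @connected_derived_series _ gr j Gconn.
apply: (scalar_comm_commute Dj_conn (derived_series1 gr j)) => // x Dx.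
by apply: IH (derived_series_comm Dx Da2); rewrite subnS; case: (k - j)%N kj.
Qed.

End Irreducible.

Lemma stable_common_eigenvector : W != 0 ->
  exists w, [/\ (w <= W)%MS, w != 0 & forall g, exists c, w *m sig g = c *: w].
Proof.
move=> W_neq0; have [W0 [W0W W0_neq0 sigW0 W0_min]] := exists_minimal_stable W_neq0 sigW.
exists (nz_row W0); split; [exact: submx_trans (nz_row_sub W0) W0W | by rewrite nz_row_eq0 |].
move=> g; have [c W0c] := derived_series_scalar W0W W0_neq0 sigW0 W0_min
  (I : derived_series gr 0 g).
by exists c; apply: W0c; exact: nz_row_sub.
Qed.

End LieKolchin.

Section UniversalSubspace.
Variables (R : realType) (G : topologicalType) (gr : topgroup G) (n : nat).
Variable rho : G -> 'M[R[i]]_n.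
Hypotheses (Gconn : connected [set: G]) (Gsolv : solvable_group gr).
Hypothesis rho_rep : representation gr rho.
Implicit Types (K V : 'M[R[i]]_n) (y w : 'rV[R[i]]_n).

Definition rep_stable K := forall g, stablemx K (rho g)^T.

Lemma actM g h y : act (rho (tg_mul gr g h)) y = act (rho g) (act (rho h) y).
Proof. by case: rho_rep => _ _ rhoM _; rewrite /act rhoM trmx_mul mulmxA. Qed.

Lemma act1 y : act (rho (tg_one gr)) y = y.
Proof. by case: rho_rep => _ rho1 _ _; rewrite /act rho1 trmx1 mulmx1. Qed.

Lemma act_sub_stable K g y : rep_stable K -> (y <= K)%MS -> (act (rho g) y <= K)%MS.
Proof. by move=> Kst yK; exact: submx_trans (submxMr _ yK) (Kst g). Qed.

Lemma quotient_common_eigenvector K : rep_stable K -> ~~ (1%:M <= K)%MS ->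
  exists y, ~~ (y <= K)%MS /\ forall g, exists c, (act (rho g) y - c *: y <= K)%MS.
Proof.
(* [y *m Q] encodes the class of [y] modulo [K] (its kernel is exactly [K]), and
   [sig] is the action induced on these classes. *)
move=> Kst K1; pose Q := cokermx K; pose sig g := pinvmx Q *m (rho g)^T *m Q.
have sigQ g y : y *m Q *m sig g = act (rho g) y *m Q.
  have QK : (y *m Q *m pinvmx Q - y <= K)%MS by rewrite submxE mulmxBl mulmxKpV ?submxMl ?subrr.
  move: (act_sub_stable g Kst QK); rewrite /act submxE !mulmxBl subr_eq0 => /eqP <-.
  by rewrite /sig !mulmxA.
have QW g : stablemx Q (sig g) by rewrite /sig mulmxA submxMl.
have QM g h w : (w <= Q)%MS -> w *m sig (tg_mul gr g h) = w *m sig h *m sig g.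
  by case/submxP=> u ->; rewrite !sigQ actM.
have Q1 w : (w <= Q)%MS -> w *m sig (tg_one gr) = w.
  by case/submxP=> u ->; rewrite sigQ act1.
have Q_cont : mxcont sig.
  apply: mxcont_mul (mxcont_cst _ _); apply: mxcont_mul (mxcont_cst _ _) _.
  by apply: mxcont_tr => i j; case: rho_rep => _ _ _ /(_ i j).
have Q_neq0 : Q != 0 by apply: contraNneq K1 => Q0; rewrite submxE mul1mx -/Q Q0.
have [_ [/submxP[y ->] y0 yc]] := stable_common_eigenvector Gconn Gsolv QW QM Q1 Q_cont Q_neq0.
exists y; split=> [|g]; first by rewrite submxE.
by have [c yQc] := yc g; exists c; rewrite submxE mulmxBl -scalemxAl -sigQ yQc subrr.
Qed.

Lemma universal_stable_extend V K : universal rho V -> rep_stable K -> (K <= V)%MS ->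
  ~~ (1%:M <= K)%MS -> exists K', [/\ rep_stable K', (K' <= V)%MS & (\rank K < \rank K')%N].
Proof.
move=> Vuniv Kst KV K1.
have [y [yK yc]] := quotient_common_eigenvector Kst K1.
have [g yV] := Vuniv y; have [c ycK] := yc g.
have c0 : c != 0.
  apply: contraNneq yK => c0; move: ycK; rewrite c0 scale0r subr0.
  by move=> /(act_sub_stable (tg_inv gr g) Kst); rewrite -actM tg_mulVg act1.
have cyV : (c *: y <= V)%MS.
  by rewrite -[c *: y](subKr (act (rho g) y)) addmx_sub ?eqmx_opp // (submx_trans ycK).
exists (K + y)%MS; split.
- move=> h; rewrite addsmxMr addsmx_sub (submx_trans (Kst h) (addsmxSl K y)) /=.
  have [d ydK] := yc h; rewrite -[_ *m _](subrK (d *: y)) addmx_sub //.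
    exact: submx_trans ydK (addsmxSl K y).
  exact: scalemx_sub (addsmxSr K y).
- by rewrite addsmx_sub KV -(eqmx_scale _ c0).
- apply: rank_ltmx; rewrite ltmxE addsmxSl; apply: contra yK.
  exact: submx_trans (addsmxSr K y).
Qed.

Lemma universal_stable_full V K : universal rho V -> rep_stable K -> (K <= V)%MS ->
  (1%:M <= V)%MS.
Proof.
move=> Vuniv; have [d] := ubnP (n - \rank K); elim: d K => // d IH K.
rewrite ltnS => Kd Kst KV; have [K1|K1] := boolP (1%:M <= K)%MS; first exact: submx_trans K1 KV.
have [K' [K'st K'V KK']] := universal_stable_extend Vuniv Kst KV K1.
apply: (IH K') => //; apply: leq_trans Kd.
exact: ltn_sub2l (leq_trans KK' (rank_leq_col K')) KK'.
Qed.

End UniversalSubspace.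

Theorem proposition5p1 (R : realType) (G : topologicalType) (gr : topgroup G)
  (n : nat) (rho : G -> 'M[R[i]]_n) (V : 'M[R[i]]_n) :
  connected (@setT G) ->
  solvable_group gr ->
  representation gr rho ->
  universal rho V ->
  (V == 1%:M)%MS.
Proof.
move=> Gconn Gsolv rho_rep Vuniv; rewrite submx1 /=.
apply: (universal_stable_full Gconn Gsolv rho_rep Vuniv (K := 0)) => [g|]; first exact: stable0mx.
exact: sub0mx.
Qed.
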